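(* Let $\alpha\in\mathbb{R}$, let $p$ be a positive integer, $a\in\mathbb{R}$, and let $f$ be a real function defined on $\mathbb{N}_{a-p+1}=\{a-p+1,a-p+2,\dots\}$. Then for all $t\in\mathbb{N}_{a+p}$, $$\nabla_a^{-\alpha}\nabla^p f(t)=\nabla^p\nabla_a^{-\alpha}f(t)-\sum_{k=0}^{p-1}\frac{(t-a)^{\overline{\alpha-p+k}}}{\Gamma(\alpha+k-p+1)}\nabla^k f(a).$$
   Context: Notation: $\mathbb{N}_c=\{c,c+1,\dots\}$, $\rho(t)=t-1$, $\nabla g(t)=g(t)-g(t-1)$, $\nabla^m=\nabla(\nabla^{m-1})$. Rising factorial: $t^{\overline{\beta}}=\Gamma(t+\beta)/\Gamma(t)$ with $0^{\overline{\beta}}=0$; the reciprocal of $\Gamma$ at a pole is taken to be $0$. For $\gamma>0$ the nabla left fractional sum is $\nabla_a^{-\gamma}g(t)=\frac{1}{\Gamma(\gamma)}\sum_{s=a+1}^{t}(t-\rho(s))^{\overline{\gamma-1}}g(s)$, where a sum with upper limit smaller than lower limit is $0$ (so these sums vanish for $t\le a$). For $\beta>0$, let $n=[\beta]+1$ with $[\beta]$ the greatest integer strictly less than $\beta$; the nabla left fractional difference is $\nabla_a^{\beta}g(t)=\nabla^n\nabla_a^{-(n-\beta)}g(t)$ (the operator of order $0$ being the identity). In the claim, for $\alpha<0$ the symbol $\nabla_a^{-\alpha}$ means the nabla left fractional difference of order $-\alpha>0$, and for $\alpha=0$ it is the identity. *)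

From Stdlib Require Import Reals Lra Lia ClassicalEpsilon Arith.Factorial.
Open Scope R_scope.

Fixpoint sum_range (F : nat -> R) (n : nat) : R :=
  match n with
  | O => 0
  | S k => sum_range F k + F k
  end.

Fixpoint prod_upto (F : nat -> R) (n : nat) : R :=
  match n with
  | O => F O
  | S k => prod_upto F k * F (S k)
  end.

(** Gamma function, via Gauss' (Euler's) limit formula for the reciprocal
    Gamma function, which is entire:
      1/Gamma(x) = lim_{m->oo} x(x+1)...(x+m) / (m! m^x).
    RGamma x is this limit (it vanishes exactly at the poles 0,-1,-2,...). *)
Definition RGamma_seq (x : R) (n : nat) : R :=
  prod_upto (fun i => x + INR i) (S n) / (INR (fact (S n)) * Rpower (INR (S n)) x).

Definition RGamma (x : R) : R :=
  epsilon (inhabits 0) (fun l => Un_cv (RGamma_seq x) l).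

(* Gamma x = 1 / RGamma x; at a pole RGamma x = 0 and Stdlib's / 0 = 0,
   so that the reciprocal / Gamma x = RGamma x is 0 at poles, as required. *)
Definition Gamma (x : R) : R := / RGamma x.

Definition rising (t beta : R) : R :=
  if Req_EM_T t 0 then 0 else Gamma (t + beta) / Gamma t.

Definition nabla (g : R -> R) (t : R) : R := g t - g (t - 1).

Fixpoint nabla_pow (m : nat) (g : R -> R) : R -> R :=
  match m with
  | O => g
  | S k => nabla (nabla_pow k g)
  end.

(** Nabla left fractional sum of order gamma > 0:
    sum_{s=a+1}^{t} (t - rho(s))^{(gamma-1)} g(s) / Gamma(gamma),
    for t in a + Z (the number of terms is t - a, and the sum is 0 for t <= a). *)
Definition nabla_sum (a gamma : R) (g : R -> R) (t : R) : R :=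
  sum_range (fun j => let s := a + INR (S j) in
                      / Gamma gamma * rising (t - (s - 1)) (gamma - 1) * g s)
            (Z.to_nat (Int_part (t - a))).

(** For beta > 0, n = [beta] + 1 where [beta] is the greatest integer
    strictly less than beta, i.e. n = ceil(beta) = 1 - up(-beta). *)
Definition frac_n (beta : R) : nat := Z.to_nat (1 - up (- beta)).

Definition nabla_sum0 (a gamma : R) (g : R -> R) : R -> R :=
  if Req_EM_T gamma 0 then g else nabla_sum a gamma g.

Definition nabla_diff (a beta : R) (g : R -> R) : R -> R :=
  nabla_pow (frac_n beta) (nabla_sum0 a (INR (frac_n beta) - beta) g).

Definition nabla_frac (a alpha : R) (g : R -> R) : R -> R :=
  match total_order_T alpha 0 with
  | inleft (left _) => nabla_diff a (- alpha) g
  | inleft (right _) => g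
  | inright _ => nabla_sum a alpha g
  end.

From Stdlib Require Import Reals Lra Lia ClassicalEpsilon ZArith.
Open Scope R_scope.

Lemma prod_upto_ext (F G : nat -> R) (n : nat) :
  (forall i, (i <= n)%nat -> F i = G i) -> prod_upto F n = prod_upto G n.
Proof.
  induction n as [|n IH]; intros H; simpl.
  - apply H; lia.
  - rewrite IH by (intros; apply H; lia). rewrite H by lia. reflexivity.
Qed.

Lemma prod_upto_shift (F : nat -> R) (n : nat) :
  prod_upto F (S n) = F O * prod_upto (fun i => F (S i)) n.
Proof.
  induction n as [|n IH]; [reflexivity|].
  change (prod_upto F (S (S n))) with (prod_upto F (S n) * F (S (S n))).
  rewrite IH; simpl; ring.
Qed.

Lemma prod_upto_nonneg (F : nat -> R) (n : nat) :
  (forall i, 0 <= F i) -> 0 <= prod_upto F n.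
Proof. intros H; induction n; simpl; [|apply Rmult_le_pos]; auto. Qed.

Lemma RGamma_seq_nonneg (x : R) (n : nat) : 0 <= x -> 0 <= RGamma_seq x n.
Proof.
  intros Hx. unfold RGamma_seq, Rdiv, Rpower. apply Rmult_le_pos.
  - apply prod_upto_nonneg; intros i; pose proof (pos_INR i); lra.
  - apply Rlt_le, Rinv_0_lt_compat, Rmult_lt_0_compat; [|apply exp_pos].
    apply lt_0_INR, lt_O_fact.
Qed.

(* Elementary bounds 1/(n+2) <= ln(n+2) - ln(n+1) <= 1/(n+1), from 1 + y <= exp y. *)
Lemma ln_succ_bounds (n : nat) :
  / INR (S (S n)) <= ln (INR (S (S n))) - ln (INR (S n)) <= / INR (S n).
Proof.
  rewrite (S_INR (S n)). set (X := INR (S n)).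
  assert (HX : 0 < X) by (apply lt_0_INR; lia).
  pose proof (exp_ineq1_le (ln X - ln (X + 1))) as Elow.
  pose proof (exp_ineq1_le (ln (X + 1) - ln X)) as Eup.
  unfold Rminus in Elow, Eup.
  rewrite exp_plus, exp_Ropp, !exp_ln in Elow, Eup by lra.
  assert (Q1 : X * / (X + 1) = 1 - / (X + 1)) by (field; lra).
  assert (Q2 : (X + 1) * / X = 1 + / X) by (field; lra).
  lra.
Qed.

Lemma RGamma_seq_succ (x : R) (n : nat) :
  RGamma_seq x (S n) = RGamma_seq x n *
    ((x + INR (S (S n))) / INR (S (S n))
     / exp (x * (ln (INR (S (S n))) - ln (INR (S n))))).
Proof.
  unfold RGamma_seq, Rpower.
  change (prod_upto (fun i => x + INR i) (S (S n)))
    with (prod_upto (fun i => x + INR i) (S n) * (x + INR (S (S n)))).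
  change (fact (S (S n))) with (S (S n) * fact (S n))%nat. rewrite mult_INR.
  assert (Hsplit : exp (x * ln (INR (S (S n)))) =
    exp (x * ln (INR (S n))) * exp (x * (ln (INR (S (S n))) - ln (INR (S n)))))
    by (rewrite <- exp_plus; f_equal; ring).
  rewrite Hsplit.
  pose proof (lt_0_INR (fact (S n)) (lt_O_fact _)).
  pose proof (lt_0_INR (S (S n)) ltac:(lia)).
  pose proof (exp_pos (x * ln (INR (S n)))).
  pose proof (exp_pos (x * (ln (INR (S (S n))) - ln (INR (S n))))).
  field; repeat split; lra.
Qed.

(* For x >= 0 the ratio above is at most 1, so the Gauss sequence decreases. *)
Lemma RGamma_seq_decreasing (x : R) : 0 <= x -> Un_decreasing (RGamma_seq x).
Proof.
  intros Hx n. rewrite RGamma_seq_succ.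
  set (N := INR (S (S n))). set (d := ln N - ln (INR (S n))).
  assert (HN : 0 < N) by (apply lt_0_INR; lia).
  assert (Hd : / N <= d) by apply ln_succ_bounds.
  assert (Hfactor : (x + N) / N <= exp (x * d)).
  { apply Rle_trans with (1 + x * d); [|apply exp_ineq1_le].
    replace ((x + N) / N) with (1 + x * / N) by (field; lra).
    apply Rplus_le_compat_l, Rmult_le_compat_l; auto. }
  pose proof (exp_pos (x * d)). pose proof (RGamma_seq_nonneg x n Hx).
  rewrite <- (Rmult_1_r (RGamma_seq x n)) at 2.
  apply Rmult_le_compat_l; auto.
  apply Rmult_le_reg_r with (exp (x * d)); auto.
  unfold Rdiv at 1. rewrite Rmult_assoc, Rinv_l, Rmult_1_l, Rmult_1_r by lra. auto.
Qed.

(* Hence it converges for x >= 0 (monotone and bounded below by 0). *)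
Lemma RGamma_seq_cv_nonneg (x : R) : 0 <= x -> exists l, Un_cv (RGamma_seq x) l.
Proof.
  intros Hx. destruct (decreasing_cv (RGamma_seq x)) as [l Hl].
  - apply RGamma_seq_decreasing; auto.
  - exists 0. intros y [i ->]. unfold opp_seq.
    pose proof (RGamma_seq_nonneg x i Hx). lra.
  - exists l; auto.
Qed.

(* The Gauss sequence at x is x times the one at x + 1, up to a factor tending to 1. *)
Lemma RGamma_seq_shift (x : R) (n : nat) :
  RGamma_seq x (S n) = x * RGamma_seq (x + 1) n *
    exp ((x + 1) * (ln (INR (S n)) - ln (INR (S (S n))))).
Proof.
  unfold RGamma_seq, Rpower.
  rewrite (prod_upto_shift _ (S n)), (prod_upto_ext (fun i => x + INR (S i))
    (fun i => x + 1 + INR i)) by (intros; rewrite S_INR; ring).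
  change (fact (S (S n))) with (S (S n) * fact (S n))%nat. rewrite mult_INR.
  set (L1 := ln (INR (S n))). set (L2 := ln (INR (S (S n)))).
  assert (HN : INR (S (S n)) = exp L2)
    by (unfold L2; rewrite exp_ln; auto; apply lt_0_INR; lia).
  assert (Hsplit : exp ((x + 1) * L1) = exp ((x + 1) * (L1 - L2)) * exp (x * L2) * exp L2)
    by (rewrite <- !exp_plus; f_equal; ring).
  rewrite Hsplit, HN.
  pose proof (lt_0_INR (fact (S n)) (lt_O_fact _)).
  pose proof (exp_pos ((x + 1) * (L1 - L2))).
  pose proof (exp_pos (x * L2)). pose proof (exp_pos L2).
  simpl INR at 1. field; repeat split; lra.
Qed.

Lemma ln_ratio_cv : Un_cv (fun n => ln (INR (S n)) - ln (INR (S (S n)))) 0.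
Proof.
  assert (Hinv : Un_cv (fun n => / INR (S n)) 0).
  { apply (cv_infty_cv_0 (fun n => INR (S n))). intros M.
    destruct (INR_unbounded M) as [N HN]. exists N. intros n Hn.
    apply Rlt_le_trans with (INR N); [lra|apply le_INR; lia]. }
  intros eps He. destruct (Hinv eps He) as [N HN]. exists N. intros n Hn.
  specialize (HN n Hn). pose proof (ln_succ_bounds n) as B.
  assert (0 < / INR (S (S n))) by (apply Rinv_0_lt_compat, lt_0_INR; lia).
  unfold R_dist in *. rewrite Rminus_0_r in *.
  rewrite Rabs_right in HN by lra. rewrite Rabs_left by lra. lra.
Qed.

Lemma RGamma_seq_cv_down (x L : R) :
  Un_cv (RGamma_seq (x + 1)) L -> Un_cv (RGamma_seq x) (x * L).
Proof.
  intros HL. apply (CV_shift _ 1).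
  apply (Un_cv_ext (fun n => x * RGamma_seq (x + 1) n *
    exp ((x + 1) * (ln (INR (S n)) - ln (INR (S (S n))))))).
  { intros n. rewrite Nat.add_1_r. symmetry. apply RGamma_seq_shift. }
  rewrite <- (Rmult_1_r (x * L)). apply CV_mult.
  - apply (CV_mult (fun _ => x)); auto.
    intros eps He. exists O. intros. unfold R_dist. rewrite Rminus_diag, Rabs_R0. auto.
  - assert (K : continuity_pt (fun y => exp ((x + 1) * y)) 0)
      by (apply derivable_continuous_pt; reg).
    pose proof (continuity_seq _ _ _ K ln_ratio_cv) as Kcv.
    simpl in Kcv. rewrite Rmult_0_r, exp_0 in Kcv. exact Kcv.
Qed.

(* Convergence everywhere, by descending from [0, +oo) one unit at a time. *)
Lemma RGamma_seq_cv (x : R) : exists l, Un_cv (RGamma_seq x) l.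
Proof.
  destruct (INR_unbounded (- x)) as [k Hk].
  revert x Hk. induction k as [|k IH]; intros x Hk.
  - apply RGamma_seq_cv_nonneg. simpl in Hk. lra.
  - destruct (Rle_lt_dec 0 x) as [Hx|Hx]; [apply RGamma_seq_cv_nonneg; auto|].
    destruct (IH (x + 1)) as [L HL]; [rewrite S_INR in Hk; lra|].
    exists (x * L). apply RGamma_seq_cv_down; auto.
Qed.

Lemma RGamma_spec (x : R) : Un_cv (RGamma_seq x) (RGamma x).
Proof. unfold RGamma. apply epsilon_spec, RGamma_seq_cv. Qed.

Lemma RGamma_rec (x : R) : RGamma x = x * RGamma (x + 1).
Proof.
  apply (UL_sequence (RGamma_seq x));
    [apply RGamma_spec | apply RGamma_seq_cv_down, RGamma_spec].
Qed.

Lemma RGamma_pole (z : Z) : (z <= 0)%Z -> RGamma (IZR z) = 0.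
Proof.
  intros Hz. replace (IZR z) with (- INR (Z.to_nat (- z)))
    by (rewrite INR_IZR_INZ, Z2Nat.id, opp_IZR by lia; ring).
  induction (Z.to_nat (- z)) as [|k IH].
  - simpl. rewrite Ropp_0, RGamma_rec. ring.
  - rewrite RGamma_rec, S_INR.
    replace (- (INR k + 1) + 1) with (- INR k) by ring. rewrite IH. ring.
Qed.

Definition taylor_mono (mu x : R) : R := rising x mu / Gamma (mu + 1).

(* Dividing by Gamma is multiplying by RGamma, including at poles. *)
Lemma div_Gamma (x y : R) : x / Gamma y = x * RGamma y.
Proof. unfold Rdiv, Gamma. rewrite Rinv_inv. reflexivity. Qed.

Lemma taylor_mono_nonzero (mu x : R) :
  x <> 0 -> taylor_mono mu x = RGamma x * RGamma (mu + 1) / RGamma (x + mu).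
Proof.
  intros Hx. unfold taylor_mono, rising. rewrite div_Gamma.
  destruct (Req_EM_T x 0) as [E|_]; [contradiction|].
  unfold Gamma, Rdiv. rewrite Rinv_inv. ring.
Qed.

(* The Taylor monomial vanishes at nonpositive integers (0^(mu) = 0 and poles of Gamma). *)
Lemma taylor_mono_nonpos (mu : R) (z : Z) : (z <= 0)%Z -> taylor_mono mu (IZR z) = 0.
Proof.
  intros Hz. destruct (Z.eq_dec z 0) as [->|Hz0].
  - unfold taylor_mono, rising. destruct (Req_EM_T 0 0); [|contradiction].
    unfold Rdiv; ring.
  - rewrite taylor_mono_nonzero, RGamma_pole by (auto; intro E; apply eq_IZR in E; lia).
    unfold Rdiv; ring.
Qed.

Lemma taylor_mono_nabla (mu : R) (z : Z) : (z <> 1)%Z \/ mu <> 0 ->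
  taylor_mono mu (IZR z) - taylor_mono mu (IZR z - 1) = taylor_mono (mu - 1) (IZR z).
Proof.
  intros Hc. replace (IZR z - 1) with (IZR (z - 1)) by (rewrite minus_IZR; reflexivity).
  destruct (Z_le_gt_dec z 0) as [Hz|Hz].
  { rewrite !taylor_mono_nonpos by lia. ring. }
  assert (Hmu : RGamma mu = mu * RGamma (mu + 1)) by apply RGamma_rec.
  assert (Nz : IZR z <> 0) by (intro E; apply eq_IZR in E; lia).
  rewrite (taylor_mono_nonzero (mu - 1)) by auto.
  replace (mu - 1 + 1) with mu by ring. rewrite Hmu.
  destruct (Z.eq_dec z 1) as [->|Hz1].
  - destruct Hc as [Hc|Hc]; [lia|].
    rewrite (taylor_mono_nonpos _ (1 - 1)), taylor_mono_nonzero by (auto; lia).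
    replace (IZR 1 + mu) with (mu + 1) by (simpl; ring).
    replace (IZR 1 + (mu - 1)) with mu by (simpl; ring). rewrite Hmu.
    destruct (Req_EM_T (RGamma (mu + 1)) 0) as [E|E].
    + rewrite E. unfold Rdiv. rewrite !Rmult_0_r. ring.
    + field. auto.
  - assert (Nz1 : IZR (z - 1) <> 0) by (intro E; apply eq_IZR in E; lia).
    rewrite !taylor_mono_nonzero by auto.
    assert (Rz : RGamma (IZR (z - 1)) = (IZR z - 1) * RGamma (IZR z))
      by (rewrite RGamma_rec, minus_IZR; f_equal; f_equal; simpl; ring).
    replace (IZR (z - 1) + mu) with (IZR z - 1 + mu) by (rewrite minus_IZR; simpl; ring).
    replace (IZR z + (mu - 1)) with (IZR z - 1 + mu) by ring.
    assert (Rzmu : RGamma (IZR z - 1 + mu) = (IZR z - 1 + mu) * RGamma (IZR z + mu))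
      by (rewrite RGamma_rec; f_equal; f_equal; ring).
    rewrite Rz, Rzmu.
    destruct (Req_EM_T (RGamma (IZR z + mu)) 0) as [E|E].
    { rewrite E. unfold Rdiv. rewrite !Rmult_0_r, Rinv_0. ring. }
    destruct (Req_EM_T (IZR z - 1 + mu) 0) as [E2|E2].
    + replace (mu + 1) with (IZR (2 - z)) by (rewrite minus_IZR; simpl; lra).
      rewrite (RGamma_pole (2 - z)) by lia. unfold Rdiv. ring.
    + field. auto.
Qed.

Lemma sum_range_ext (F G : nat -> R) (n : nat) :
  (forall k, (k < n)%nat -> F k = G k) -> sum_range F n = sum_range G n.
Proof.
  induction n as [|n IH]; intros H; simpl; auto.
  rewrite IH by (intros; apply H; lia). rewrite H by lia. reflexivity.
Qed.

Lemma sum_range_sub (F G : nat -> R) (n : nat) :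
  sum_range (fun k => F k - G k) n = sum_range F n - sum_range G n.
Proof. induction n as [|n IH]; simpl; [ring|rewrite IH; ring]. Qed.

Lemma sum_range_first (F : nat -> R) (n : nat) :
  sum_range F (S n) = F O + sum_range (fun j => F (S j)) n.
Proof. induction n as [|n IH]; simpl in *; [|rewrite IH]; ring. Qed.

Lemma sum_range_zero (F : nat -> R) (n : nat) :
  (forall k, (k < n)%nat -> F k = 0) -> sum_range F n = 0.
Proof.
  intros H. rewrite (sum_range_ext F (fun _ => 0)) by auto.
  clear H. induction n as [|n IH]; simpl; [|rewrite IH]; ring.
Qed.

Lemma nabla_at (h : R -> R) (a : R) (z : Z) :
  nabla h (a + IZR z) = h (a + IZR z) - h (a + IZR (z - 1)).
Proof.
  unfold nabla. rewrite minus_IZR.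
  replace (a + IZR z - 1) with (a + (IZR z - IZR 1)) by (simpl; ring). reflexivity.
Qed.

Lemma nabla_pow_nabla (p : nat) (h : R -> R) :
  nabla_pow p (nabla h) = nabla (nabla_pow p h).
Proof. induction p as [|p IH]; simpl; [|rewrite IH]; reflexivity. Qed.

Lemma nabla_pow_add (n p : nat) (h : R -> R) :
  nabla_pow n (nabla_pow p h) = nabla_pow (n + p) h.
Proof. induction n as [|n IH]; simpl; [|rewrite IH]; reflexivity. Qed.

Lemma nabla_sum_at (a g : R) (h : R -> R) (z : Z) :
  nabla_sum a g h (a + IZR z) =
  sum_range (fun j => taylor_mono (g - 1) (IZR z - INR j) * h (a + INR (S j))) (Z.to_nat z).
Proof.
  unfold nabla_sum. replace (a + IZR z - a) with (IZR z) by ring.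
  replace (Int_part (IZR z)) with z by (apply Int_part_spec; lra).
  apply sum_range_ext. intros k _. cbv zeta. unfold taylor_mono.
  replace (g - 1 + 1) with g by ring.
  replace (a + IZR z - (a + INR (S k) - 1)) with (IZR z - INR k) by (rewrite S_INR; ring).
  unfold Rdiv. ring.
Qed.

(* Summation by parts: the fractional sum of a difference, with boundary term at a. *)
Lemma nabla_sum_nabla (a g : R) (h : R -> R) (z : Z) :
  nabla_sum a g (nabla h) (a + IZR z) =
  nabla (nabla_sum a g h) (a + IZR z) - taylor_mono (g - 1) (IZR z) * h a.
Proof.
  rewrite nabla_at, !nabla_sum_at.
  destruct (Z_le_gt_dec z 0) as [Hz|Hz].
  { replace (Z.to_nat z) with O by lia. replace (Z.to_nat (z - 1)) with O by lia.
    simpl. rewrite taylor_mono_nonpos by auto. ring. }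
  destruct (Z.to_nat z) as [|n] eqn:En; [lia|].
  replace (Z.to_nat (z - 1)) with n by lia.
  replace (IZR (z - 1)) with (INR n) by (rewrite INR_IZR_INZ; f_equal; lia).
  replace (IZR z) with (INR (S n)) by (rewrite INR_IZR_INZ; f_equal; lia).
  rewrite (sum_range_ext _ (fun j => taylor_mono (g - 1) (INR (S n) - INR j) * h (a + INR (S j))
                                   - taylor_mono (g - 1) (INR (S n) - INR j) * h (a + INR j))).
  2:{ intros k _. unfold nabla.
      replace (a + INR (S k) - 1) with (a + INR k) by (rewrite S_INR; ring). ring. }
  rewrite sum_range_sub, (sum_range_first (fun j => taylor_mono (g - 1) (INR (S n) - INR j) * h (a + INR j))).
  rewrite (sum_range_ext (fun j => taylor_mono (g - 1) (INR (S n) - INR (S j)) * h (a + INR (S j)))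
                         (fun j => taylor_mono (g - 1) (INR n - INR j) * h (a + INR (S j)))).
  2:{ intros k _. replace (INR (S n) - INR (S k)) with (INR n - INR k)
        by (rewrite !S_INR; ring). reflexivity. }
  simpl (INR 0). rewrite Rplus_0_r, Rminus_0_r. ring.
Qed.

Definition init_correction (a g : R) (q : nat) (f : R -> R) (x : R) : R :=
  sum_range (fun k => taylor_mono (g - INR q + INR k) x * nabla_pow k f a) q.

(* Reals that are not integers; they avoid every pole of Gamma. *)
Definition nonint (g : R) : Prop := forall n : Z, g <> IZR n.

Lemma nonint_sub_nat (g : R) (n : nat) : nonint g -> nonint (g - INR n).
Proof.
  intros Hg k E. apply (Hg (k + Z.of_nat n)%Z).
  rewrite plus_IZR, <- INR_IZR_INZ. lra.
Qed.

Lemma init_correction_succ (a g : R) (q : nat) (f : R -> R) (x : R) :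
  init_correction a g (S q) f x =
  init_correction a (g - 1) q f x + taylor_mono (g - 1) x * nabla_pow q f a.
Proof.
  unfold init_correction. cbn [sum_range]. f_equal.
  - apply sum_range_ext. intros k _. rewrite S_INR. do 3 f_equal. ring.
  - do 2 f_equal. rewrite S_INR. ring.
Qed.

Lemma init_correction_nabla (a g : R) (q : nat) (f : R -> R) (z : Z) :
  (Z.of_nat q < z)%Z \/ nonint g ->
  init_correction a g q f (IZR z) - init_correction a g q f (IZR (z - 1)) =
  init_correction a (g - 1) q f (IZR z).
Proof.
  intros Hc. unfold init_correction. rewrite <- sum_range_sub.
  apply sum_range_ext. intros k Hk.
  replace (g - 1 - INR q + INR k) with (g - INR q + INR k - 1) by ring.
  rewrite <- taylor_mono_nabla, minus_IZR; [simpl; ring|].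
  destruct Hc as [Hz|Hg]; [left; lia|right].
  apply (nonint_sub_nat g (q - k)) in Hg. rewrite minus_INR in Hg by lia.
  intros E. apply (Hg 0%Z). simpl. lra.
Qed.

Lemma init_correction_pole (a : R) (z : Z) (q : nat) (f : R -> R) (x : R) :
  (z <= 0)%Z -> init_correction a (IZR z) q f x = 0.
Proof.
  intros Hz. apply sum_range_zero. intros k Hk.
  unfold taylor_mono. rewrite div_Gamma.
  replace (IZR z - INR q + INR k + 1) with (IZR (z - Z.of_nat q + Z.of_nat k + 1))
    by (rewrite !plus_IZR, minus_IZR, <- !INR_IZR_INZ; reflexivity).
  rewrite RGamma_pole by lia. ring.
Qed.

Lemma nabla_sum_nabla_pow (a g : R) (f : R -> R) (q : nat) (z : Z) :
  (Z.of_nat q <= z)%Z \/ nonint g ->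
  nabla_sum a g (nabla_pow q f) (a + IZR z) =
  nabla_pow q (nabla_sum a g f) (a + IZR z) - init_correction a g q f (IZR z).
Proof.
  revert z. induction q as [|q IH]; intros z Hc.
  - unfold init_correction. simpl. ring.
  - simpl nabla_pow. rewrite nabla_sum_nabla, !nabla_at, !IH
      by (destruct Hc; [left; lia|right; auto]).
    rewrite init_correction_succ, <- init_correction_nabla
      by (destruct Hc; [left; lia|right; auto]).
    ring.
Qed.

(* The same after n further differences, for non-integer g: the boundary sum
   then has order g - n, which is the case of a fractional difference. *)
Lemma nabla_pow_nabla_sum_nabla_pow (a g : R) (f : R -> R) (p n : nat) (z : Z) :
  nonint g ->
  nabla_pow n (nabla_sum a g (nabla_pow p f)) (a + IZR z) =
  nabla_pow p (nabla_pow n (nabla_sum a g f)) (a + IZR z)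
  - init_correction a (g - INR n) p f (IZR z).
Proof.
  intros Hg. revert z. induction n as [|n IH]; intros z.
  - simpl nabla_pow at 1 3. replace (g - INR 0) with g by (simpl; ring).
    apply nabla_sum_nabla_pow; auto.
  - simpl nabla_pow at 1 3. rewrite nabla_pow_nabla, !nabla_at, !IH.
    replace (g - INR (S n)) with (g - INR n - 1) by (rewrite S_INR; ring).
    rewrite <- init_correction_nabla by (right; apply nonint_sub_nat; auto).
    ring.
Qed.

Lemma nonint_unit_interval (g : R) : 0 < g < 1 -> nonint g.
Proof.
  intros [H0 H1] n E. subst g.
  apply lt_IZR in H0. apply lt_IZR in H1. lia.
Qed.

Lemma frac_n_spec (beta : R) :
  0 < beta -> 0 <= INR (frac_n beta) - beta < 1.
Proof.
  intros Hb. unfold frac_n. destruct (archimed (- beta)) as [A1 A2].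
  assert (Hup : (up (- beta) < 1)%Z) by (apply lt_IZR; lra).
  rewrite INR_IZR_INZ, Z2Nat.id, minus_IZR by lia. simpl (IZR 1). lra.
Qed.

Theorem theorem2p7 (alpha a : R) (p : nat) (f : R -> R) :
  (0 < p)%nat ->
  forall m : nat, (p <= m)%nat ->
  let t := a + INR m in
  nabla_frac a alpha (nabla_pow p f) t =
    nabla_pow p (nabla_frac a alpha f) t
    - sum_range (fun k =>
        rising (t - a) (alpha - INR p + INR k)
          / Gamma (alpha + INR k - INR p + 1)
          * nabla_pow k f a) p.
Proof.
  intros _ m Hm t.
  assert (Hcorr : sum_range (fun k => rising (t - a) (alpha - INR p + INR k)
            / Gamma (alpha + INR k - INR p + 1) * nabla_pow k f a) p
          = init_correction a alpha p f (IZR (Z.of_nat m))).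
  { apply sum_range_ext. intros k _. unfold taylor_mono, t.
    rewrite <- INR_IZR_INZ. do 3 f_equal; ring. }
  rewrite Hcorr. unfold t. rewrite INR_IZR_INZ.
  unfold nabla_frac. destruct (total_order_T alpha 0) as [[Hneg|Hzero]|Hpos].
  - (* nabla_a^{-alpha} = nabla^n of the fractional sum of order n + alpha in [0, 1) *)
    unfold nabla_diff, nabla_sum0. set (n := frac_n (- alpha)).
    assert (Hn : 0 <= INR n - - alpha < 1) by (apply frac_n_spec; lra).
    destruct (Req_EM_T (INR n - - alpha) 0) as [Hint|Hfrac].
    + replace alpha with (IZR (- Z.of_nat n)) by (rewrite opp_IZR, <- INR_IZR_INZ; lra).
      rewrite init_correction_pole, !nabla_pow_add, Nat.add_comm by lia. ring.
    + rewrite nabla_pow_nabla_sum_nabla_pow by (apply nonint_unit_interval; lra).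
      replace (INR n - - alpha - INR n) with alpha by ring. reflexivity.
  - subst alpha. rewrite init_correction_pole by lia. ring.
  - apply nabla_sum_nabla_pow. left. lia.
Qed.
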